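(* Let $A$ and $B$ be two $n\times n$ generalized tournament matrices with the same principal minors of orders at most $4$. Then $A$ is inseparable if and only if $B$ is inseparable.
   Context: A generalized tournament matrix of order $n$ is a real $n\times n$ matrix $M=(m_{ij})$ with nonnegative entries satisfying $M+M^{t}=J_n-I_n$. Write $[n]=\{1,\ldots,n\}$. A clan of $M$ is a subset $X\subseteq[n]$ such that for all $i,j\in X$ and $k\in[n]\setminus X$, $m_{ik}=m_{jk}$ and $m_{ki}=m_{kj}$. $M$ is separable if $[n]$ can be partitioned into two nonempty clans, and inseparable otherwise. *)

From HB Require Import structures.
From mathcomp Require Import all_boot all_order all_algebra.
From mathcomp Require Import reals.
Set Implicit Arguments. Unset Strict Implicit. Unset Printing Implicit Defensive.
Import Order.TTheory GRing.Theory Num.Theory.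
Local Open Scope ring_scope.

Definition gen_tournament (R : realType) (n : nat) (M : 'M[R]_n) : Prop :=
  (forall i j, 0 <= M i j) /\
  (forall i j, M i j + M j i = (if i == j then 0 else 1)).

Definition clan (R : realType) (n : nat) (M : 'M[R]_n) (X : {set 'I_n}) : Prop :=
  forall i j k, i \in X -> j \in X -> k \notin X ->
    M i k = M j k /\ M k i = M k j.

Definition separable (R : realType) (n : nat) (M : 'M[R]_n) : Prop :=
  exists X : {set 'I_n}, [/\ X != set0, ~: X != set0, clan M X & clan M (~: X)].

Definition inseparable (R : realType) (n : nat) (M : 'M[R]_n) : Prop :=
  ~ separable M.

Definition principal_submx (R : realType) (n : nat) (M : 'M[R]_n)
    (I : {set 'I_n}) : 'M[R]_#|I| :=
  \matrix_(i < #|I|, j < #|I|) M (enum_val i) (enum_val j).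

Definition principal_minor (R : realType) (n : nat) (M : 'M[R]_n)
    (I : {set 'I_n}) : R :=
  \det (principal_submx M I).

From HB Require Import structures.
From mathcomp Require Import all_boot all_order all_algebra all_fingroup.
From mathcomp Require Import reals ring lra.
Import Order.TTheory GRing.Theory Num.Theory.
Local Open Scope ring_scope.
Set Implicit Arguments. Unset Strict Implicit.

(* Equal principal minors of order 2 force B i j to be A i j or 1 - A i j; equal minors of
   order 3 force A and B to have the same 3-cycle weights M i j M j k M k i + M i k M k j M j i.
   Let X, ~: X split A into two clans, so that A x y = c for x in X and y outside X, and call
   such a pair flipped when B x y = 1 - c <> c.  Comparing cycle weights on triangles with two
   crossing edges shows that the sets of flipped partners of the points of X form a chain, and
   fixes the orientation in B of the remaining edges.  If every crossing pair is flipped, X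
   still splits B; otherwise the points of X with the smallest set of flipped partners,
   together with that set, form a clan of B whose complement is a clan. *)

(* Entries are given by a function on nat so that the ordinals produced by the Laplace
   expansion compute away under /=. *)
Lemma det_mx2 (R : comNzRingType) (g : nat -> nat -> R) :
  \det (\matrix_(a < 2, b < 2) g a b) = g 0 0 * g 1 1 - g 0 1 * g 1 0.
Proof.
rewrite (expand_det_row _ ord0) !big_ord_recr big_ord0 /= /cofactor !det_mx11 !mxE /=.
ring.
Qed.

Lemma det_mx3 (R : comNzRingType) (g : nat -> nat -> R) :
  \det (\matrix_(a < 3, b < 3) g a b) =
    g 0 0 * (g 1 1 * g 2 2 - g 1 2 * g 2 1)
  - g 0 1 * (g 1 0 * g 2 2 - g 1 2 * g 2 0)
  + g 0 2 * (g 1 0 * g 2 1 - g 1 1 * g 2 0).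
Proof.
rewrite (expand_det_row _ ord0) !big_ord_recr big_ord0 /= /cofactor.
rewrite !(expand_det_row _ ord0) !big_ord_recr big_ord0 /= /cofactor !det_mx11 !mxE /=.
by rewrite !big_ord0 /bump /=; ring.
Qed.

Lemma det_row_col_perm (R : comNzRingType) m (s : 'S_m) (A : 'M[R]_m) :
  \det (row_perm s (col_perm s A)) = \det A.
Proof.
rewrite row_permE col_permE !det_mulmx !det_perm odd_permV mulrCA.
by rewrite -expr2 sqrr_sign mulr1.
Qed.

Lemma principal_minor_seq (R : realType) n (M : 'M[R]_n) (s : seq 'I_n) (x0 : 'I_n) :
  uniq s -> principal_minor M [set x in s] =
  \det (\matrix_(a < size s, b < size s) M (nth x0 s a) (nth x0 s b)).
Proof.
move=> s_uniq; set I := [set x in s].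
have /tuple_permP[p s_def] : perm_eq s (enum_tuple I).
  by apply: uniq_perm => [||x]; rewrite ?enum_uniq // mem_enum inE.
have nth_s (a : 'I_#|I|) : nth x0 s a = enum_val (p a).
  by rewrite s_def -tnth_nth tnth_mktuple (tnth_nth x0) -enum_val_nth.
have -> : principal_minor M I =
    \det (\matrix_(a < #|I|, b < #|I|) M (nth x0 s a) (nth x0 s b)).
  rewrite /principal_minor -(det_row_col_perm p); congr (\det _).
  by apply/matrixP => a b; rewrite !mxE !nth_s.
have : size s = #|I| by rewrite s_def size_tuple.
by move: (size s) => m ->.
Qed.

Definition cycle3 (R : realType) n (M : 'M[R]_n) (i j k : 'I_n) : R :=
  M i j * M j k * M k i + M i k * M k j * M j i.

Section HollowMinors.
Variables (R : realType) (n : nat) (M : 'M[R]_n).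
Hypothesis M_diag0 : forall k, M k k = 0.

Lemma principal_minor2 i j : i != j ->
  principal_minor M [set i; j] = - (M i j * M j i).
Proof.
move=> ij; have -> : [set i; j] = [set x in [:: i; j]] by apply/setP => x; rewrite !inE.
rewrite (principal_minor_seq _ i) /= ?inE ?ij //.
rewrite (det_mx2 (fun a b => M (nth i [:: i; j] a) (nth i [:: i; j] b))) /= !M_diag0.
ring.
Qed.

Lemma principal_minor3 i j k : i != j -> i != k -> j != k ->
  principal_minor M [set i; j; k] = cycle3 M i j k.
Proof.
move=> ij ik jk.
have -> : [set i; j; k] = [set x in [:: i; j; k]].
  by apply/setP => x; rewrite !inE orbA.
rewrite (principal_minor_seq _ i) /= ?inE ?negb_or ?ij ?ik ?jk //.
rewrite (det_mx3 (fun a b => M (nth i [:: i; j; k] a) (nth i [:: i; j; k] b))) /=.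
by rewrite !M_diag0 /cycle3; ring.
Qed.

End HollowMinors.

Lemma eq_mul_subr1 (R : idomainType) (a b : R) :
  a * (1 - a) = b * (1 - b) -> b = a \/ b = 1 - a.
Proof.
move=> e; have : (b - a) * (1 - a - b) = b * (1 - b) - a * (1 - a) by ring.
rewrite -e subrr => /eqP; rewrite mulf_eq0 !subr_eq0 => /orP[/eqP -> | /eqP <-].
  by left.
by right.
Qed.

Section Tournament.
Variables (R : realType) (n : nat) (M : 'M[R]_n).
Hypothesis tM : gen_tournament M.

Lemma tournament_diag i : M i i = 0.
Proof. by case: tM => _ /(_ i i); rewrite eqxx; lra. Qed.

Lemma tournament_opp i j : i != j -> M j i = 1 - M i j.
Proof. by case: tM => _ /(_ i j) + ij; rewrite (negbTE ij); lra. Qed.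

Lemma cycle3_tournament x y z : x != y -> x != z -> y != z ->
  cycle3 M x y z = M x y * M y z * (1 - M x z) + M x z * (1 - M y z) * (1 - M x y).
Proof.
move=> xy xz yz.
by rewrite /cycle3 (tournament_opp xz) (tournament_opp yz) (tournament_opp xy).
Qed.

Lemma separableP : separable M <->
  exists X : {set 'I_n}, exists c : R,
    [/\ X != set0, ~: X != set0 & forall x y, x \in X -> y \notin X -> M x y = c].
Proof.
split=> [[X [/set0Pn[x0 x0X] /set0Pn[y0 y0X] clanX clanY]] | [X [c [X0 Y0 M_cross]]]].
  exists X, (M x0 y0); split=> [||x y xX yX].
  - by apply/set0Pn; exists x0.
  - by apply/set0Pn; exists y0.
  have [-> _] := clanX x x0 y xX x0X yX.
  have yY : y \in ~: X by rewrite inE.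
  have x0Y : x0 \notin ~: X by rewrite inE negbK.
  by have [_ ->] := clanY y y0 x0 yY y0X x0Y.
have M_back x y : x \in X -> y \notin X -> M y x = 1 - c.
  by move=> xX yX; rewrite tournament_opp ?M_cross //; apply: contraNneq yX => <-.
exists X; split=> // i j k; rewrite ?inE ?negbK => iX jX kX.
  by rewrite (M_cross _ _ iX kX) (M_cross _ _ jX kX) (M_back _ _ iX kX) (M_back _ _ jX kX).
by rewrite (M_cross _ _ kX iX) (M_cross _ _ kX jX) (M_back _ _ kX iX) (M_back _ _ kX jX).
Qed.

End Tournament.

Section MinorTransfer.
Variables (R : realType) (n : nat) (A B : 'M[R]_n).
Hypotheses (tA : gen_tournament A) (tB : gen_tournament B).
Hypothesis minors_eq :
  forall I : {set 'I_n}, (#|I| <= 3)%N -> principal_minor A I = principal_minor B I.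

Lemma entry_flip i j : i != j -> B i j = A i j \/ B i j = 1 - A i j.
Proof.
move=> ij; apply: eq_mul_subr1; apply: oppr_inj.
have := minors_eq (I := [set i; j]); rewrite cards2 ij => /(_ isT).
rewrite !principal_minor2 ?(tournament_opp _ ij) //; exact: tournament_diag.
Qed.

Lemma cycle3_eq i j k : i != j -> i != k -> j != k -> cycle3 A i j k = cycle3 B i j k.
Proof.
move=> ij ik jk.
have card3 : (#|[set i; j; k]| <= 3)%N.
  by rewrite -setUA cardsU1 cards2 jk !inE negb_or ij ik.
by move: (minors_eq card3); rewrite !principal_minor3 //; exact: tournament_diag.
Qed.

(* The cycle weight of A on x, x', y is c (1 - c) whatever A x x' is; that of B equals
   it only if B x x' = 1 - c. *)
Lemma flip_orient x x' y c : x != x' -> x != y -> x' != y ->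
  A x y = c -> A x' y = c -> B x y = 1 - c -> B x' y = c -> 1 - c != c ->
  B x' x = c.
Proof.
move=> xx' xy x'y Axy Ax'y Bxy Bx'y c_half.
have c2 : 2 * c - 1 != 0 by apply: contra c_half => /eqP c2; apply/eqP; lra.
have := cycle3_eq xx' xy x'y.
rewrite !cycle3_tournament // Axy Ax'y Bxy Bx'y (tournament_opp tB xx').
set a := A x x'; set b := B x x' => cyc.
have : (2 * c - 1) * (b - (1 - c)) = 0.
  have -> : (2 * c - 1) * (b - (1 - c)) =
      b * c * (1 - (1 - c)) + (1 - c) * (1 - c) * (1 - b)
    - (a * c * (1 - c) + c * (1 - c) * (1 - a)) by ring.
  by rewrite cyc subrr.
by move/eqP; rewrite mulf_eq0 (negbTE c2) subr_eq0 => /eqP; lra.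
Qed.

Variables (X : {set 'I_n}) (c : R).
Hypothesis A_cross : forall x y, x \in X -> y \notin X -> A x y = c.

Definition flips x := [set y | (y \notin X) && (B x y != c)].

Lemma flips_out x y : y \in flips x -> y \notin X.
Proof. by rewrite inE => /andP[]. Qed.

Lemma B_unflipped x y : y \notin X -> y \notin flips x -> B x y = c.
Proof. by rewrite inE => -> /negPn/eqP. Qed.

Lemma B_flipped x y : x \in X -> y \in flips x -> B x y = 1 - c.
Proof.
move=> xX /[dup] /flips_out yX; rewrite inE yX => /eqP Bxy.
have xy : x != y by apply: contraNneq yX => <-.
by case: (entry_flip xy); rewrite A_cross.
Qed.

Lemma flips_half x y : x \in X -> y \in flips x -> 1 - c != c.
Proof. by move=> xX yF; rewrite -(B_flipped xX yF); move: yF; rewrite inE => /andP[]. Qed.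

Lemma flips_orient_row x x' y : x \in X -> x' \in X ->
  y \in flips x -> y \notin flips x' -> B x' x = c.
Proof.
move=> xX x'X yFx yFx'; have yX := flips_out yFx.
have xx' : x != x' by apply: contraNneq yFx' => <-.
have cross_neq z : z \in X -> z != y by move=> zX; apply: contraNneq yX => <-.
exact: (flip_orient xx' (cross_neq x xX) (cross_neq x' x'X) (A_cross xX yX)
  (A_cross x'X yX) (B_flipped xX yFx) (B_unflipped yX yFx') (flips_half xX yFx)).
Qed.

Lemma flips_orient_col x y y' : x \in X -> y \in flips x ->
  y' \notin X -> y' \notin flips x -> B y y' = c.
Proof.
move=> xX yFx y'X y'Fx; have yX := flips_out yFx.
have yy' : y != y' by apply: contraNneq y'Fx => <-.
have opp_x (M : 'M[R]_n) z : gen_tournament M -> z \notin X -> M z x = 1 - M x z.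
  by move=> tM zX; apply: (tournament_opp tM); apply: contraNneq zX => <-.
have x_neq z : z \notin X -> z != x by move=> zX; apply: contraNneq zX => ->.
suff : B y' y = 1 - c by rewrite (tournament_opp tB yy'); lra.
apply: (flip_orient yy' (x_neq _ yX) (x_neq _ y'X));
  rewrite ?(opp_x A) ?(opp_x B) ?A_cross ?(B_flipped xX yFx) ?(B_unflipped y'X y'Fx)
    ?subKr //.
by rewrite eq_sym (flips_half xX yFx).
Qed.

Lemma flips_total x x' : x \in X -> x' \in X ->
  (flips x \subset flips x') || (flips x' \subset flips x).
Proof.
move=> xX x'X; case: (boolP (_ \subset _)) => //= /subsetPn[y yFx yFx'].
apply/subsetP => y' y'Fx'; apply: contraT => y'Fx.
have xx' : x != x' by apply: contraNneq yFx' => <-.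
have Bx'x := flips_orient_row xX x'X yFx yFx'.
have Bxx' := flips_orient_row x'X xX y'Fx' y'Fx.
have := tournament_opp tB xx'; rewrite Bx'x Bxx' => c_half.
by move: (flips_half xX yFx); rewrite -c_half eqxx.
Qed.

Section MinimalFlips.
Variable x0 : 'I_n.
Hypotheses (x0X : x0 \in X) (x0_min : forall x, x \in X -> (#|flips x0| <= #|flips x|)%N).

Lemma flips_min_sub x : x \in X -> flips x0 \subset flips x.
Proof.
move=> xX; case/orP: (flips_total x0X xX) => // sub.
by have /eqP <- : flips x == flips x0 by rewrite eqEcard sub x0_min.
Qed.

Definition flip_block := [set v in X | flips v == flips x0] :|: flips x0.

Lemma in_flip_block v :
  (v \in flip_block) = ((v \in X) && (flips v == flips x0)) || (v \in flips x0).
Proof. by rewrite !inE. Qed.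

Lemma B_cross_flip_block p q : p \in flip_block -> q \notin flip_block -> B p q = c.
Proof.
rewrite !in_flip_block negb_or negb_and => /orP[/andP[pX /eqP Fp] | pF0] /andP[qP qF0].
  case: (boolP (q \in X)) => [qX | qX]; last by rewrite B_unflipped // Fp.
  have /properP[_ [y yFq yF0]] : flips x0 \proper flips q.
    by rewrite properEneq eq_sym flips_min_sub // andbT; move: qP; rewrite qX.
  by apply: (flips_orient_row qX pX yFq); rewrite Fp.
have pX := flips_out pF0.
case: (boolP (q \in X)) => [qX | qX]; last exact: (flips_orient_col x0X pF0).
have qp : q != p by apply: contraNneq pX => <-.
have := tournament_opp tB qp; rewrite (B_flipped qX) ?(subsetP (flips_min_sub qX)) //.
by move=> ->; ring.
Qed.

End MinimalFlips.

Lemma B_separable : X != set0 -> ~: X != set0 -> separable B.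
Proof.
move=> /set0Pn[x1 x1X] Y0; apply/(separableP tB).
case: (boolP [exists x in X, exists y in ~: X, y \notin flips x]); last first.
  move=> /exists_inPn all_flipped.
  exists X, (1 - c); split=> // [|x y xX yX]; first by apply/set0Pn; exists x1.
  apply: B_flipped => //.
  by have /exists_inPn/(_ y) := all_flipped x xX; rewrite in_setC negbK; apply.
case/exists_inP => x xX /exists_inP[y]; rewrite inE => yX yFx.
have [x0 x0X x0_min] := arg_minnP (fun x => #|flips x|) xX.
have {}x0X : x0 \in X := x0X.
exists (flip_block x0), c; split; last exact: B_cross_flip_block.
  by apply/set0Pn; exists x0; rewrite in_flip_block x0X eqxx.
apply/set0Pn; exists y; rewrite inE in_flip_block negb_or negb_and yX /=.
by apply: contra yFx; apply/subsetP/flips_min_sub.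
Qed.

End MinorTransfer.

Lemma separable_transfer (R : realType) (n : nat) (A B : 'M[R]_n) :
  gen_tournament A -> gen_tournament B ->
  (forall I : {set 'I_n}, (#|I| <= 3)%N -> principal_minor A I = principal_minor B I) ->
  separable A -> separable B.
Proof.
move=> tA tB minors_eq /(separableP tA)[X [c [X0 Y0 A_cross]]].
exact: (B_separable tA tB minors_eq A_cross X0 Y0).
Qed.

Unset Implicit Arguments.

Theorem proposition5p5 (R : realType) (n : nat) (A B : 'M[R]_n) :
  gen_tournament A -> gen_tournament B ->
  (forall I : {set 'I_n}, (#|I| <= 4)%N -> principal_minor A I = principal_minor B I) ->
  (inseparable A <-> inseparable B).
Proof.
move=> tA tB minors_eq.
have minors3_eq (I : {set 'I_n}) : (#|I| <= 3)%N -> principal_minor A I = principal_minor B I.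
  by move/leqW; exact: minors_eq.
split; apply: contra_not; apply: separable_transfer => //.
by move=> I /minors3_eq ->.
Qed.
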